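(* Let $\varphi$ be a $\mathrm{THT}_1$ formula having some equilibrium model. Then $\varphi$ has an equilibrium model which is strongly ultimately periodic and of size at most $2+2^{|\varphi|}$.
   Context: Fix a finite set $P$ of atomic propositions. THT formulas over $P$ are given by $\varphi ::= p \mid \bot \mid \varphi\vee\varphi \mid \varphi\wedge\varphi \mid \varphi\rightarrow\varphi \mid \mathsf{X}\varphi \mid \varphi\,\mathsf{U}\,\varphi \mid \varphi\,\mathsf{R}\,\varphi$, with $\neg\varphi:=\varphi\rightarrow\bot$. The modalities $\mathsf F\varphi:=\top\,\mathsf U\,\varphi$ and $\mathsf G\varphi:=\bot\,\mathsf R\,\varphi$ are also allowed. A THT interpretation is a pair $M=(H,T)$ of infinite words over $2^P$ with $H(i)\subseteq T(i)$ for all $i$; write $M(i)=(H(i),T(i))$; $M$ is total if $H=T$. Satisfaction $M,i\models\varphi$ is defined by: - $M,i\not\models\bot$; - $M,i\models p$ iff $p\in H(i)$; - $\vee$ and $\wedge$ are interpreted as usual; - $M,i\models\varphi\rightarrow\psi$ iff for both $H'\in\{H,T\}$, either $(H',T),i\not\models\varphi$ or $(H',T),i\models\psi$; - $\mathsf X,\mathsf U,\mathsf R$ have their usual LTL clauses evaluated in $M$. $M\models\varphi$ means $M,0\models\varphi$. An equilibrium model of $\varphi$ is a total $(T,T)\models\varphi$ such that $(H,T)\not\models\varphi$ for every $H$ with $H(i)\subseteq T(i)$ for all $i$ and $H\ne T$. $\mathrm{THT}_1$ is the set of THT formulas in which no temporal modality ($\mathsf X,\mathsf U,\mathsf R,\mathsf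 F,\mathsf G$) occurs within the scope of another. $|\varphi|$ is the number of distinct subformulas of $\varphi$. An interpretation $M$ is strongly ultimately periodic if there is $i\ge 0$ with $M(k)=M(i)$ for all $k\ge i$. Its size is $j+1$, where $j$ is the smallest such $i$. *)

From HB Require Import structures.
From mathcomp Require Import all_boot.
Set Implicit Arguments.
Unset Strict Implicit.
Unset Printing Implicit Defensive.

Section THT.
Variable P : finType.

(* THT formulas; F and G are included as primitive modalities since the
   paper allows them in the syntax (they matter for |phi|). *)
Inductive form : Type :=
  | Atom of P
  | Bot
  | Or of form & form
  | And of form & form
  | Imp of form & form
  | Next of form
  | Until of form & form
  | Release of form & form
  | Fin of form
  | Glob of form.

Definition Neg (f : form) := Imp f Bot.
Definition Top := Imp Bot Bot.

Fixpoint form_eqb (a b : form) : bool :=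
  match a, b with
  | Atom p, Atom q => p == q
  | Bot, Bot => true
  | Or a1 a2, Or b1 b2 => form_eqb a1 b1 && form_eqb a2 b2
  | And a1 a2, And b1 b2 => form_eqb a1 b1 && form_eqb a2 b2
  | Imp a1 a2, Imp b1 b2 => form_eqb a1 b1 && form_eqb a2 b2
  | Next a1, Next b1 => form_eqb a1 b1
  | Until a1 a2, Until b1 b2 => form_eqb a1 b1 && form_eqb a2 b2
  | Release a1 a2, Release b1 b2 => form_eqb a1 b1 && form_eqb a2 b2
  | Fin a1, Fin b1 => form_eqb a1 b1
  | Glob a1, Glob b1 => form_eqb a1 b1
  | _, _ => false
  end.

Lemma form_eqbP : Equality.axiom form_eqb.
Proof.
elim=> [p||a1 IH1 a2 IH2|a1 IH1 a2 IH2|a1 IH1 a2 IH2|a1 IH1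
        |a1 IH1 a2 IH2|a1 IH1 a2 IH2|a1 IH1|a1 IH1] [q||b1 b2|b1 b2|b1 b2|b1
        |b1 b2|b1 b2|b1|b1] /=; try by constructor.
- by apply: (iffP eqP) => [->|[]].
all: try (by case: (IH1 b1) => [->|h]; constructor => // [[]]).
all: by case: (IH1 b1) => [->|h]; [case: (IH2 b2) => [->|h2]|];
        constructor => // [[]].
Qed.

HB.instance Definition _ := hasDecEq.Build form form_eqbP.

Fixpoint subforms (f : form) : seq form :=
  f :: match f with
       | Atom _ | Bot => [::]
       | Or a b | And a b | Imp a b | Until a b | Release a b =>
           subforms a ++ subforms b
       | Next a | Fin a | Glob a => subforms a
       end.

Definition fsize (f : form) : nat := size (undup (subforms f)).

Fixpoint tdepth (f : form) : nat :=
  match f with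
  | Atom _ | Bot => 0
  | Or a b | And a b | Imp a b => maxn (tdepth a) (tdepth b)
  | Until a b | Release a b => (maxn (tdepth a) (tdepth b)).+1
  | Next a | Fin a | Glob a => (tdepth a).+1
  end.

Definition THT1 (f : form) : Prop := tdepth f <= 1.

Definition word := nat -> {set P}.

(* THT satisfaction (H,T),i |= f ; assumes H i \subset T i *)
Fixpoint sat (H T : word) (i : nat) (f : form) {struct f} : Prop :=
  match f with
  | Atom p => p \in H i
  | Bot => False
  | Or a b => sat H T i a \/ sat H T i b
  | And a b => sat H T i a /\ sat H T i b
  | Imp a b => (sat H T i a -> sat H T i b) /\ (sat T T i a -> sat T T i b)
  | Next a => sat H T i.+1 a
  | Until a b => exists k, i <= k /\ sat H T k b /\
                   forall j, i <= j -> j < k -> sat H T j a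
  | Release a b => forall k, i <= k -> sat H T k b \/
                   exists j, [/\ i <= j, j < k & sat H T j a]
  (* F a := Top U a ;  G a := Bot R a *)
  | Fin a => exists k, i <= k /\ sat H T k a
  | Glob a => forall k, i <= k -> sat H T k a
  end.

Definition subword (H T : word) : Prop := forall i, H i \subset T i.

Definition equilibrium (f : form) (T : word) : Prop :=
  sat T T 0 f /\
  forall H : word, subword H T -> (exists i, H i != T i) -> ~ sat H T 0 f.

Definition periodic_from (H T : word) (j : nat) : Prop :=
  forall k, j <= k -> (H k, T k) = (H j, T j).

Definition strongly_ult_periodic (H T : word) : Prop :=
  exists j, periodic_from H T j.

(* M is strongly ultimately periodic of size at most n: the smallest j with
   periodic_from H T j satisfies j+1 <= n; equivalently some such j does. *)
Definition sup_size_le (H T : word) (n : nat) : Prop :=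
  exists j, periodic_from H T j /\ j.+1 <= n.

End THT.

From Stdlib Require Import Classical.
From mathcomp Require Import all_boot zify.
Set Implicit Arguments. Unset Strict Implicit. Unset Printing Implicit Defensive.

(* In a THT_1 formula every temporal operator is applied to a state formula,
   whose truth at a position only depends on the state there, restricted to
   the atoms A of phi.  So at position 0, phi only sees the states at 0 and 1,
   which A-states occur later, and which occur before the first occurrence of
   a given one.  Collapsing T to its states at 0 and 1, then the first
   occurrences (from position 2 on) of its at most 2^|A| A-states, then an
   A-state recurring infinitely often, preserves these data along a
   surjection that never skips a value; it transfers satisfaction back and
   forth, also for any interpretation below the collapsed trace, and hence
   equilibrium.  This gives the bound as |A| < |phi| unless phi is an atom;
   state formulas, atoms included, only see position 0, so for them it
   suffices to truncate T after it. *)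

Section Locality.
Variable P : finType.
Implicit Types (A : {set P}) (f : form P).

Fixpoint atoms_within A f : bool :=
  match f with
  | Atom p => p \in A
  | Bot => true
  | Or a b | And a b | Imp a b | Until a b | Release a b =>
      atoms_within A a && atoms_within A b
  | Next a | Fin a | Glob a => atoms_within A a
  end.

Lemma atoms_withinT f : atoms_within setT f.
Proof.
by elim: f => [p||a IHa b IHb|a IHa b IHb|a IHa b IHb|a IHa|a IHa b IHb|a IHa b IHb|a IHa|a IHa];
  rewrite /= ?inE ?IHa ?IHb.
Qed.

Lemma atoms_within_subforms A f :
  (forall p, Atom p \in subforms f -> p \in A) -> atoms_within A f.
Proof.
elim: f => [p||a IHa b IHb|a IHa b IHb|a IHa b IHb|a IHa|a IHa b IHb|a IHa b IHb|a IHa|a IHa]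
  //= sub; first by apply: sub; rewrite inE eqxx.
all: try by apply: IHa => p hp; apply: sub; rewrite inE hp orbT.
all: by rewrite IHa ?IHb // => p hp; apply: sub; rewrite inE mem_cat hp ?orbT.
Qed.

Lemma sat_state_local A f : tdepth f = 0 -> atoms_within A f ->
  forall H1 T1 H2 T2 j j', H1 j :&: A = H2 j' :&: A -> T1 j :&: A = T2 j' :&: A ->
  sat H1 T1 j f <-> sat H2 T2 j' f.
Proof.
elim: f => [p||a IHa b IHb|a IHa b IHb|a IHa b IHb|a|a b|a b|a|a] //= d0 Af
  H1 T1 H2 T2 j j' EH ET.
- have: (p \in H1 j :&: A) = (p \in H2 j' :&: A) by rewrite EH.
  by rewrite !inE Af !andbT => ->.
all: have [da db] : tdepth a = 0 /\ tdepth b = 0 by lia.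
all: case/andP: Af => Aa Ab.
all: have := IHa da Aa _ _ _ _ _ _ EH ET; have := IHb db Ab _ _ _ _ _ _ EH ET.
all: try tauto.
have := IHa da Aa _ _ _ _ _ _ ET ET; have := IHb db Ab _ _ _ _ _ _ ET ET; tauto.
Qed.

End Locality.

Section Reindex.
Variables (P : finType) (g : nat -> nat).
Hypothesis g_gap_free : forall k i, i <= g k -> exists2 j, j <= k & g j = i.
Hypothesis g_surj : forall m, exists k, g k = m.
Hypothesis g1 : g 1 = 1.
Implicit Types (A : {set P}) (f : form P).

Lemma g0 : g 0 = 0.
Proof. by have [j] := g_gap_free (leq0n (g 0)); rewrite leqn0 => /eqP ->. Qed.

Lemma gap_free_lt k i : i < g k -> exists2 j, j < k & g j = i.
Proof.
move=> ik; have [j jk gj] := g_gap_free (ltnW ik).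
exists j => //; rewrite ltn_neqAle jk andbT.
by apply: contraTneq ik => ej; rewrite -gj ej ltnn.
Qed.

Lemma least_preimage m : exists k, g k = m /\ forall j, j < k -> g j < m.
Proof.
have exm : exists k, g k == m by have [k <-] := g_surj m; exists k.
case: (ex_minnP exm) => k /eqP gk mink; exists k; split=> // j jk.
rewrite ltnNge; apply/negP => mj; have [i ij gi] := g_gap_free mj.
by have := mink i; rewrite gi eqxx => /(_ isT); lia.
Qed.

Section Modalities.
Variables (H1 T1 H2 T2 : word P) (a b : form P).
Hypothesis sat_a : forall j, sat H1 T1 j a <-> sat H2 T2 (g j) a.
Hypothesis sat_b : forall j, sat H1 T1 j b <-> sat H2 T2 (g j) b.

Lemma sat_until_reindex : sat H1 T1 0 (Until a b) <-> sat H2 T2 0 (Until a b).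
Proof.
split=> [[k [_ [bk ak]]] | [m [_ [bm am]]]].
- exists (g k); split=> //; split=> [|i _ ik]; first exact/sat_b.
  by have [j jk <-] := gap_free_lt ik; apply/sat_a/ak.
- have [k [gk lt_k]] := least_preimage m.
  exists k; split=> //; split=> [|j _ jk]; first by apply/sat_b; rewrite gk.
  by apply/sat_a/am; last exact: lt_k.
Qed.

Lemma sat_release_reindex : sat H1 T1 0 (Release a b) <-> sat H2 T2 0 (Release a b).
Proof.
split=> R => [m _ | k _].
- have [k [gk lt_k]] := least_preimage m.
  case: (R k isT) => [bk | [j [_ jk aj]]]; first by left; rewrite -gk; apply/sat_b.
  by right; exists (g j); split=> //; [exact: lt_k | exact/sat_a].
- case: (R (g k) isT) => [bk | [i [_ ik ai]]]; first by left; apply/sat_b.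
  have [j jk gj] := gap_free_lt ik.
  by right; exists j; split=> //; apply/sat_a; rewrite gj.
Qed.

Lemma sat_fin_reindex : sat H1 T1 0 (Fin a) <-> sat H2 T2 0 (Fin a).
Proof.
split=> [[k [_ ak]] | [m [_ am]]]; first by exists (g k); split=> //; apply/sat_a.
by have [k gk] := g_surj m; exists k; split=> //; apply/sat_a; rewrite gk.
Qed.

Lemma sat_glob_reindex : sat H1 T1 0 (Glob a) <-> sat H2 T2 0 (Glob a).
Proof.
split=> G m _; last exact/sat_a/G.
by have [k <-] := g_surj m; apply/sat_a/G.
Qed.

End Modalities.

Lemma sat_reindex A f : THT1 f -> atoms_within A f ->
  forall H1 T1 H2 T2, (forall j, H1 j :&: A = H2 (g j) :&: A) ->
  (forall j, T1 j :&: A = T2 (g j) :&: A) -> sat H1 T1 0 f <-> sat H2 T2 0 f.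
Proof.
rewrite /THT1; elim: f => [p||a IHa b IHb|a IHa b IHb|a IHa b IHb|a _|a _ b _|a _ b _|a _|a _]
  /= d1 Af H1 T1 H2 T2 EH ET.
- by have := sat_state_local (f := Atom p) erefl Af (EH 0) (ET 0); rewrite g0.
- by [].
1-3: have [da db] : tdepth a <= 1 /\ tdepth b <= 1 by lia.
1-3: case/andP: Af => Aa Ab.
1-3: have := IHa da Aa _ _ _ _ EH ET; have := IHb db Ab _ _ _ _ EH ET; try tauto.
- have := IHa da Aa _ _ _ _ ET ET; have := IHb db Ab _ _ _ _ ET ET; tauto.
- have da : tdepth a = 0 by lia.
  by have := sat_state_local da Af (EH 1) (ET 1); rewrite g1.
1-2: have [da db] : tdepth a = 0 /\ tdepth b = 0 by lia.
1-2: case/andP: Af => Aa Ab.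
1-2: have sat_a j := sat_state_local da Aa (EH j) (ET j).
1-2: have sat_b j := sat_state_local db Ab (EH j) (ET j).
- exact: sat_until_reindex.
- exact: sat_release_reindex.
1-2: have da : tdepth a = 0 by lia.
1-2: have sat_a j := sat_state_local da Af (EH j) (ET j).
- exact: sat_fin_reindex.
- exact: sat_glob_reindex.
Qed.

Lemma equilibrium_reindex A phi (T T' : word P) :
  THT1 phi -> atoms_within A phi -> (forall j, T j :&: A = T' (g j)) ->
  equilibrium phi T -> equilibrium phi T'.
Proof.
move=> tht Aphi TT' [satT minT].
have {tht Aphi}sat_reindex := sat_reindex tht Aphi.
have agree j : T j :&: A = T' (g j) :&: A by rewrite -TT' -setIA setIid.
split=> [|H' subH' [i neq] satH']; first exact/(sat_reindex _ _ _ _ agree agree).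
have /properP[_ [e eT' eH']] : H' i \proper T' i by rewrite properEneq neq subH'.
have [k gk] := g_surj i.
have /andP[eT eA] : (e \in T k) && (e \in A) by rewrite -in_setI TT' gk.
pose H j := H' (g j) :|: (T j :\: A).
have HA j : H j :&: A = H' (g j) :&: A.
  by apply/setP => x; rewrite !inE; case: (x \in A); rewrite ?andbT ?andbF ?orbF.
apply: (minT H) => [j | | ]; last exact/(sat_reindex _ _ _ _ HA agree).
  apply/subsetP => x; rewrite !inE => /orP[xH | /andP[_ //]].
  by have := subsetP (subH' (g j)) x xH; rewrite -TT' inE => /andP[].
by exists k; apply/eqP => Hk; move: eT; rewrite -Hk !inE eA orbF gk (negbTE eH').
Qed.

End Reindex.

Section FirstOccurrence.
Variables (K : eqType) (cls : nat -> K).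

Definition same_slot j i := (i == j) || [&& 2 <= i, 2 <= j & cls i == cls j].

Lemma same_slot_refl j : same_slot j j.
Proof. by rewrite /same_slot eqxx. Qed.

Definition first_rep j := ex_minn (ex_intro _ j (same_slot_refl j)).

Lemma first_rep_le j : first_rep j <= j.
Proof. by rewrite /first_rep; case: ex_minnP => r _; apply; apply: same_slot_refl. Qed.

Lemma first_rep_small j : j < 2 -> first_rep j = j.
Proof.
rewrite /first_rep; case: ex_minnP => r /orP[/eqP // | /and3P[_ j2 _]] _ j1.
by move: j2; rewrite leqNgt j1.
Qed.

Lemma first_rep_cls j : cls (first_rep j) = cls j.
Proof. by rewrite /first_rep; case: ex_minnP => r /orP[/eqP -> | /and3P[_ _ /eqP]]. Qed.

Lemma first_rep_ge2 j : 2 <= j -> 2 <= first_rep j.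
Proof. by rewrite /first_rep; case: ex_minnP => r /orP[/eqP -> | /and3P[]]. Qed.

Lemma first_rep_eq j k : 2 <= j -> 2 <= k -> cls j = cls k -> first_rep j = first_rep k.
Proof.
move=> j2 k2 ejk; apply: eq_ex_minn => i; rewrite /same_slot j2 k2 ejk /=.
suff slot l : 2 <= l -> cls l = cls k ->
    (i == l) || (2 <= i) && (cls i == cls k) = (2 <= i) && (cls i == cls k).
  by rewrite !slot.
by move=> l2 lk; case: (eqVneq i l) => [->|]; rewrite ?l2 ?lk ?eqxx.
Qed.

Lemma first_rep_idem j : first_rep (first_rep j) = first_rep j.
Proof.
have [j1 | j2] := ltnP j 1.+1; first by rewrite !first_rep_small.
by apply: first_rep_eq; rewrite ?first_rep_cls ?first_rep_ge2.
Qed.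

End FirstOccurrence.

Section Rank.
Variable D : pred nat.

Definition rank j := count D (iota 0 j).

Lemma rankS j : rank j.+1 = rank j + D j.
Proof. by rewrite /rank -addn1 iotaD count_cat /= addn0. Qed.

Lemma rank_mono : {homo rank : m n / m <= n}.
Proof. by move=> m n mn; rewrite /rank -(subnKC mn) iotaD count_cat leq_addr. Qed.

Lemma rank_hit n i : i < rank n -> exists j, [/\ j < n, D j & rank j = i].
Proof.
elim: n => [|n IH]; first by rewrite /rank.
rewrite rankS; case: (ltnP i (rank n)) => [/IH[j [jn Dj rj]] _ | ge lt].
  by exists j; split=> //; lia.
by case Dn: (D n) lt => /= lt; [exists n; split=> //; lia | lia].
Qed.

Lemma nth_rank x0 q j : j < q -> D j -> nth x0 (filter D (iota 0 q)) (rank j) = j.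
Proof.
move=> jq Dj; rewrite -(subnKC (ltnW jq)) iotaD filter_cat nth_cat size_filter ltnn subnn.
have -> : q - j = (q - j).-1.+1 by lia.
by rewrite /= add0n Dj.
Qed.

Lemma rank_unbounded : (forall n, exists2 j, n <= j & D j) -> forall m, exists n, m < rank n.
Proof.
move=> Dinf; elim=> [|m [n IH]].
  by have [j _ Dj] := Dinf 0; exists j.+1; rewrite rankS Dj addn1.
have [j nj Dj] := Dinf n; exists j.+1; rewrite rankS Dj addn1 ltnS.
exact: leq_trans IH (rank_mono nj).
Qed.

End Rank.

Section Collapse.
Variables (K : eqType) (cls : nat -> K) (q : nat).
Hypothesis q_ge2 : 2 <= q.
Hypothesis fresh_lt_q : forall j, first_rep cls j = j -> j < q.
Hypothesis q_recurs : forall n, exists2 j, n <= j & cls j = cls q.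

(* The kept positions beyond q make collapse surjective although the collapsed
   trace is constant there: an interpretation below it may still vary. *)
Definition kept j := (first_rep cls j == j) || (q <= j) && (cls j == cls q).
Definition rep j := if kept j then j else first_rep cls j.
Definition collapse j := rank kept (rep j).
Definition kept_prefix := filter kept (iota 0 q).
Definition expand i := nth q kept_prefix i.

Lemma kept_rep j : kept (rep j).
Proof. by rewrite /rep; case: ifP => // _; rewrite /kept first_rep_idem eqxx. Qed.

Lemma rep_le j : rep j <= j.
Proof. by rewrite /rep; case: ifP => // _; apply: first_rep_le. Qed.

Lemma cls_rep j : cls (rep j) = cls j.
Proof. by rewrite /rep; case: ifP => // _; apply: first_rep_cls. Qed.

Lemma collapse_kept j : kept j -> collapse j = rank kept j.
Proof. by rewrite /collapse /rep => ->. Qed.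

Lemma collapse_gap_free k i : i <= collapse k -> exists2 j, j <= k & collapse j = i.
Proof.
rewrite leq_eqVlt => /orP[/eqP -> | /rank_hit[j [jk Dj <-]]].
  by exists (rep k); [apply: rep_le | rewrite collapse_kept ?kept_rep].
by exists j; [exact: leq_trans (ltnW jk) (rep_le k) | rewrite collapse_kept].
Qed.

Lemma collapse_surj m : exists k, collapse k = m.
Proof.
have kept_inf n : exists2 j, n <= j & kept j.
  have [j nj cj] := q_recurs (maxn n q).
  have [nj' qj] : n <= j /\ q <= j by split; apply: leq_trans nj; rewrite ?leq_maxl ?leq_maxr.
  by exists j; rewrite // /kept cj eqxx qj orbT.
have [n /rank_hit[j [_ Dj <-]]] := rank_unbounded kept_inf m.
by exists j; rewrite collapse_kept.
Qed.

Lemma kept_small j : j < 2 -> kept j.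
Proof. by move=> j2; rewrite /kept first_rep_small ?eqxx. Qed.

Lemma collapse1 : collapse 1 = 1.
Proof. by rewrite collapse_kept ?kept_small // /rank /= kept_small. Qed.

Lemma expand_tail i : size kept_prefix <= i -> expand i = q.
Proof. exact: nth_default. Qed.

Lemma cls_expand_collapse j : cls (expand (collapse j)) = cls j.
Proof.
rewrite -(cls_rep j) /expand /collapse; have := kept_rep j; set e := rep j => De.
have [eq | qe] := ltnP e q; first by rewrite nth_rank.
rewrite nth_default; last by rewrite size_filter; apply: rank_mono.
by case/orP: De => [/eqP /fresh_lt_q | /andP[_ /eqP //]]; rewrite ltnNge qe.
Qed.

Lemma size_kept_prefix (S : seq K) : (forall j, cls j \in S) -> size kept_prefix <= 2 + size S.
Proof.
move=> inS; rewrite /kept_prefix size_filter -(subnKC q_ge2) iotaD count_cat.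
rewrite (@eq_in_count _ _ (fun j => first_rep cls j == j) (iota 2 (q - 2))); last first.
  move=> j; rewrite mem_iota subnKC // => /andP[_ jq].
  by rewrite /kept leqNgt jq orbF.
rewrite /= !kept_small // leq_add2l -size_filter -(size_map cls).
apply: uniq_leq_size => [|_ /mapP[j _ ->] //].
rewrite map_inj_in_uniq ?filter_uniq ?iota_uniq //.
move=> j k; rewrite !mem_filter !mem_iota.
move=> /andP[/eqP rj /andP[j2 _]] /andP[/eqP rk /andP[k2 _]] ejk.
by rewrite -rj -rk; apply: first_rep_eq.
Qed.

End Collapse.

Lemma eventually_forall_fin (K : finType) (Pr : K -> nat -> Prop) :
  (forall x, exists N, forall j, N <= j -> Pr x j) ->
  exists N, forall x j, N <= j -> Pr x j.
Proof.
move=> ev; suff [N HN] : exists N, forall x j, x \in enum K -> N <= j -> Pr x j.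
  by exists N => x j; apply: HN; rewrite mem_enum.
elim: (enum K) => [|x s [N HN]]; first by exists 0.
have [M HM] := ev x; exists (maxn N M) => y j; rewrite inE => /orP[/eqP -> | ys] Nj.
  by apply: HM; lia.
by apply: HN => //; lia.
Qed.

Lemma exists_recurrent_value (K : finType) (u : nat -> K) :
  exists c, forall n, exists2 j, n <= j & u j = c.
Proof.
apply: NNPP => none.
have [N HN] : exists N, forall c j, N <= j -> u j <> c.
  apply: eventually_forall_fin => c; apply: NNPP => recurs; apply: none; exists c => n.
  by apply: NNPP => later; apply: recurs; exists n => j nj ujc; apply: later; exists j.
exact: HN (leqnn N) erefl.
Qed.

Lemma first_rep_bounded (K : finType) (u : nat -> K) :
  exists N, forall j, first_rep u j = j -> j < N.
Proof.
have [N HN] : exists N, forall x j, N <= j -> u j = x -> first_rep u j <> j.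
  apply: eventually_forall_fin => x.
  case: (classic (exists2 j0, 2 <= j0 & first_rep u j0 = j0 /\ u j0 = x))
    => [[j0 j02 [r0 u0]] | none].
    exists (maxn 2 j0.+1) => j j0j ujx rj.
    have j2 : 2 <= j by lia.
    by have := first_rep_eq (cls := u) j2 j02; rewrite rj r0 ujx u0 => /(_ erefl); lia.
  by exists 2 => j j2 ujx rj; apply: none; exists j.
exists (maxn N 2) => j rj; rewrite ltnNge; apply/negP => jN.
by apply: (HN (u j) j) => //; lia.
Qed.

Lemma exists_collapse_point (K : finType) (u : nat -> K) : exists q,
  [/\ 2 <= q, forall j, first_rep u j = j -> j < q & forall n, exists2 j, n <= j & u j = u q].
Proof.
have [N fresh] := first_rep_bounded u; have [c rec] := exists_recurrent_value u.
have [q qN uq] := rec (maxn N 2); exists q; rewrite uq; split=> // [|j /fresh]; lia.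
Qed.

Section Equilibrium.
Variable P : finType.
Implicit Types (phi : form P) (T : word P).


Definition atoms phi : {set P} := [set p | Atom p \in subforms phi].

Lemma equilibrium_collapse phi T : THT1 phi -> equilibrium phi T ->
  exists T' n, [/\ equilibrium phi T', periodic_from T' T' n & n <= 2 + 2 ^ #|atoms phi|].
Proof.
move=> tht eqT; set A := atoms phi; pose cls j := T j :&: A.
have [q [q2 fresh rec]] := exists_collapse_point cls.
pose T' i := cls (expand cls q i).
exists T', (size (kept_prefix cls q)); split.
- apply: (equilibrium_reindex (@collapse_gap_free _ cls q) (collapse_surj rec)
    (collapse1 cls q) tht _ _ eqT) => [|j]; last by rewrite /T' (cls_expand_collapse fresh).
  by apply: atoms_within_subforms => p; rewrite inE.
- by move=> k k_ge; rewrite /T' !expand_tail.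
- rewrite -card_powerset cardE; apply: size_kept_prefix => // j.
  by rewrite mem_enum powersetE subsetIr.
Qed.

Definition truncate T : word P := fun i => if i == 0 then T 0 else set0.

Lemma truncate_periodic T : periodic_from (truncate T) (truncate T) 1.
Proof. by move=> [|k]. Qed.

Lemma equilibrium_truncate phi T :
  tdepth phi = 0 -> equilibrium phi T -> equilibrium phi (truncate T).
Proof.
move=> d0 [satT minT].
have sat0 H1 T1 H2 T2 : H1 0 = H2 0 -> T1 0 = T2 0 -> sat H1 T1 0 phi <-> sat H2 T2 0 phi.
  by move=> eH eT; apply: (sat_state_local d0 (atoms_withinT phi)); rewrite !setIT.
split=> [|H' subH' [i neq] satH'].
  exact: (sat0 T T (truncate T) (truncate T) erefl erefl).1 satT.
have i0 : i = 0.
  case: i neq (subH' i) => // i; rewrite /truncate /= subset0 => /negP neq /eqP H0.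
  by case: neq; rewrite H0.
subst i; apply: (minT (fun j => if j == 0 then H' 0 else T j)) => [[|j] //= | |].
- by exists 0.
- exact/(sat0 _ _ H' (truncate T)).
Qed.

Lemma card_atoms_lt_fsize phi : (forall p, phi <> Atom p) -> #|atoms phi| < fsize phi.
Proof.
move=> not_atom; rewrite /fsize cardE.
have -> : (size (enum (atoms phi))).+1 = size (phi :: map (@Atom P) (enum (atoms phi))).
  by rewrite /= size_map.
apply: uniq_leq_size.
- rewrite /= map_inj_uniq ?enum_uniq ?andbT; last by move=> a b [].
  by apply/mapP => [[p _ /not_atom]].
- move=> x; rewrite inE mem_undup => /orP[/eqP -> | /mapP[p]].
  + by case: phi {not_atom} => *; rewrite inE eqxx.
  + by rewrite mem_enum inE => ? ->.
Qed.

End Equilibrium.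

Theorem mainTheorem4 (P : finType) (phi : form P) :
  THT1 phi ->
  (exists T : word P, equilibrium phi T) ->
  exists T : word P, equilibrium phi T /\
    strongly_ult_periodic T T /\ sup_size_le T T (2 + 2 ^ fsize phi).
Proof.
move=> tht [T eqT].
have [d0 | d1] : tdepth phi = 0 \/ tdepth phi = 1 by move: tht; rewrite /THT1; lia.
  exists (truncate T); split; first exact: equilibrium_truncate.
  have per := truncate_periodic T.
  by split; [exists 1 | exists 1; split=> //; apply: leq_addr].
have [T' [n [eqT' per n_le]]] := equilibrium_collapse tht eqT.
exists T'; split=> //; split; exists n => //; split=> //.
have : 2 ^ #|atoms phi|.+1 <= 2 ^ fsize phi.
  by rewrite leq_exp2l // card_atoms_lt_fsize // => p phi_p; rewrite phi_p in d1.
have : 0 < 2 ^ #|atoms phi| by rewrite expn_gt0.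
rewrite expnS; lia.
Qed.
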